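(* Let $H,K$ be Hilbert spaces, let $T_1$ be a densely defined closed operator on $H$ with closed range and $T_2$ a densely defined closed operator from $D(T_2)\subset K$ into $H$ with closed range, and suppose $R(T_1)\perp R(T_2)$ in $H$. Let $T=\begin{bmatrix}T_1 & T_2\\ 0 & 0\end{bmatrix}$ be the operator on $H\bigoplus K$ with domain $D(T_1)\bigoplus D(T_2)$ given by $T(x_1,x_2)=(T_1x_1+T_2x_2,\,0)$. Then $T^{\dagger}=\begin{bmatrix}T_1^{\dagger} & 0\\ T_2^{\dagger} & 0\end{bmatrix}$, i.e. $T^{\dagger}(y_1,y_2)=(T_1^{\dagger}y_1,\,T_2^{\dagger}y_1)$.
   Context: $H\bigoplus K$ is the Hilbert direct sum. For a closed operator $A$ (with closed range), $C(A)=D(A)\cap N(A)^{\perp}$ and the Moore–Penrose inverse $A^{\dagger}$ is defined on $R(A)\oplus^{\perp}R(A)^{\perp}$ by $A^{\dagger}y=(A|_{C(A)})^{-1}y$ for $y\in R(A)$ and $A^{\dagger}y=0$ for $y\in R(A)^{\perp}$. *)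

From mathcomp Require Import all_boot all_algebra.
From mathcomp Require Import complex.
From mathcomp Require Import boolp classical_sets reals.
Import GRing.Theory Num.Theory.

Set Implicit Arguments.
Unset Strict Implicit.
Unset Printing Implicit Defensive.

Local Open Scope ring_scope.
Local Open Scope classical_set_scope.

Section Hilbert.
Variable R : realType.
Variable V : lmodType R[i].
Variable ip : V -> V -> R[i].

Definition is_inner_product : Prop :=
  [/\ (forall (a : R[i]) (x y z : V), ip (a *: x + y) z = a * ip x z + ip y z),
      (forall x y : V, ip y x = (ip x y)^*),
      (forall x : V, 0 <= ip x x) &
      (forall x : V, ip x x = 0 -> x = 0)].

(* u n --> x in the norm ||v|| = sqrt (ip v v) (we compare squared norms;
   positive elements of R[i] are exactly the positive reals) *)
Definition seq_cvg_to (u : nat -> V) (x : V) : Prop :=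
  forall e : R[i], 0 < e ->
    exists N : nat, forall n : nat, (N <= n)%N -> ip (u n - x) (u n - x) < e.

Definition seq_cauchy (u : nat -> V) : Prop :=
  forall e : R[i], 0 < e ->
    exists N : nat, forall m n : nat, (N <= m)%N -> (N <= n)%N ->
      ip (u m - u n) (u m - u n) < e.

Definition is_hilbert : Prop :=
  is_inner_product /\
  (forall u : nat -> V, seq_cauchy u -> exists x, seq_cvg_to u x).

Definition is_closed_set (S : set V) : Prop :=
  forall (u : nat -> V) (x : V), (forall n, S (u n)) -> seq_cvg_to u x -> S x.

Definition is_dense (S : set V) : Prop :=
  forall x : V, exists u : nat -> V, (forall n, S (u n)) /\ seq_cvg_to u x.

Definition is_subspace (S : set V) : Prop :=
  S 0 /\ (forall (a : R[i]) (x y : V), S x -> S y -> S (a *: x + y)).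

Definition orth (S : set V) : set V := [set y | forall x, S x -> ip x y = 0].

End Hilbert.

Definition sum_ip (R : realType) (V W : lmodType R[i])
  (ipV : V -> V -> R[i]) (ipW : W -> W -> R[i]) : V * W -> V * W -> R[i] :=
  fun x y => ipV x.1 y.1 + ipW x.2 y.2.

(* (possibly unbounded) operators: a domain and an action on it *)
Record op (R : realType) (V W : lmodType R[i]) := Op {
  dom : set V;
  app : V -> W
}.
Arguments Op {R V W}.

Section Operators.
Variable R : realType.
Variables V W : lmodType R[i].
Variable ipV : V -> V -> R[i].
Variable ipW : W -> W -> R[i].
Variable A : op V W.

Definition op_linear : Prop :=
  is_subspace (dom A) /\
  (forall (a : R[i]) (x y : V), dom A x -> dom A y ->
     app A (a *: x + y) = a *: app A x + app A y).

Definition range_op : set W := [set app A x | x in dom A].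
Definition kernel_op : set V := [set x | dom A x /\ app A x = 0].

Definition densely_defined : Prop := is_dense ipV (dom A).

Definition closed_op : Prop :=
  op_linear /\
  (forall (u : nat -> V) (x : V) (y : W),
     (forall n, dom A (u n)) -> seq_cvg_to ipV u x ->
     seq_cvg_to ipW (fun n => app A (u n)) y ->
     dom A x /\ app A x = y).

Definition closed_range : Prop := is_closed_set ipW range_op.

Definition coimage_dom : set V := dom A `&` orth ipV kernel_op.

(* Moore-Penrose inverse: domain R(A) ⊕ R(A)^⊥; for y = y1 + y2 with
   y1 ∈ R(A), y2 ∈ R(A)^⊥, A^† y = (A|_{C(A)})^{-1} y1 *)
Definition mp_dom : set W :=
  [set y | exists y1 y2, range_op y1 /\ orth ipW range_op y2 /\ y = y1 + y2].

Definition mp_app (y : W) : V :=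
  xget 0 [set x | coimage_dom x /\
                  exists y2, orth ipW range_op y2 /\ y = app A x + y2].

Definition mp_inverse : op W V := Op mp_dom mp_app.

End Operators.

Definition op_eq (R : realType) (V W : lmodType R[i]) (A B : op V W) : Prop :=
  dom A = dom B /\ (forall x, dom A x -> app A x = app B x).

Definition upper_row_op (R : realType) (H K : lmodType R[i])
  (T1 : op H H) (T2 : op K H) : op (H * K)%type (H * K)%type :=
  Op [set x | dom T1 x.1 /\ dom T2 x.2]
     (fun x => (app T1 x.1 + app T2 x.2, 0)).

Definition left_col_op (R : realType) (H K : lmodType R[i])
  (S1 : op H H) (S2 : op H K) : op (H * K)%type (H * K)%type :=
  Op [set y | dom S1 y.1 /\ dom S2 y.1]
     (fun y => (app S1 y.1, app S2 y.1)).

(* Since R(T1) ⊥ R(T2), the range of T is {(r1 + r2, 0)}, so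
   R(T)^⊥ = (R(T1)^⊥ ∩ R(T2)^⊥) ⊕ K and N(T) = N(T1) ⊕ N(T2).
   Hence (h, k) lies in R(T) ⊕ R(T)^⊥ iff h lies in R(Ti) ⊕ R(Ti)^⊥ for
   i = 1, 2; and if h = Ti xi + wi with xi ∈ C(Ti) and wi ⊥ R(Ti), then
   (x1, x2) ∈ C(T) and (h, k) = T (x1, x2) + (w1 - T2 x2, k) is the
   decomposition of (h, k) along R(T) ⊕ R(T)^⊥, where w1 - T2 x2 = w2 - T1 x1.
   The only analytic input is that the xi exist, i.e. that Ti^† is well
   defined: this is the projection theorem for the closed subspace N(Ti), whose
   minimizing sequences the parallelogram law makes Cauchy. *)

From mathcomp Require Import all_boot all_order all_algebra.
From mathcomp Require Import complex.
From mathcomp Require Import boolp classical_sets reals.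
From mathcomp Require Import lra.
Import Order.TTheory GRing.Theory Num.Theory.

Set Implicit Arguments.
Unset Strict Implicit.
Unset Printing Implicit Defensive.

Local Open Scope classical_set_scope.
Local Open Scope complex_scope.
Local Open Scope ring_scope.
(* Otherwise [Re] and [Im] are the R[i]-valued ones of numClosedFieldType. *)
Local Notation Re := complex.Re.
Local Notation Im := complex.Im.

Lemma quadratic_ge0_coef0 (F : realFieldType) (M r : F) :
  0 <= M -> (forall t, 0 <= t ^+ 2 * M - 2 * t * r) -> r = 0.
Proof.
move=> M_ge0 ge0; have [t r_eq] : exists t, r = t * (M + 1).
  by exists (r / (M + 1)); rewrite divfK // lt0r_neq0 //; lra.
subst r; have ge0_t := ge0 t; have -> : t = 0 by nra.
by rewrite mul0r.
Qed.

Lemma invr_natS_le (F : numFieldType) k m :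
  (k <= m)%N -> m.+1%:R^-1 <= k.+1%:R^-1 :> F.
Proof. by move=> km; rewrite lef_pV2 ?posrE ?ltr0Sn // ler_nat ltnS. Qed.

Lemma addr_eq_sub (G : zmodType) (a b c d : G) : a + b = c + d -> a - c = d - b.
Proof. by move=> e; rewrite -[a](addrK b) e addrAC [c + d]addrC addrK. Qed.

Section ComplexReal.
Variable R : realType.
Implicit Types (r : R) (x : R[i]).

Lemma ReJ x : Re (x^*) = Re x. Proof. by case: x. Qed.
Lemma conj_real r : (r%:C)^* = r%:C. Proof. exact: conjc_real. Qed.
Lemma Re_realM r x : Re (r%:C * x) = r * Re x.
Proof. by case: x => a b /=; rewrite mul0r subr0. Qed.
Lemma Re_conjiM x : Re ('i^* * x) = Im x.
Proof. by case: x => a b /=; rewrite mul0r mulN1r opprK add0r. Qed.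
Lemma ge0_real x : 0 <= x -> x = (Re x)%:C.
Proof. by move/ger0_Im; case: x => a b /= ->. Qed.

End ComplexReal.

Section Subspace.
Variables (R : realType) (V : lmodType R[i]) (N : set V).
Hypothesis N_sub : is_subspace N.

Lemma subspace0 : N 0. Proof. exact: N_sub.1. Qed.
Lemma subspaceD x y : N x -> N y -> N (x + y).
Proof. by move=> Nx Ny; have := N_sub.2 1 x y Nx Ny; rewrite scale1r. Qed.
Lemma subspaceZ a x : N x -> N (a *: x).
Proof. by move=> Nx; have := N_sub.2 a x 0 Nx subspace0; rewrite addr0. Qed.
Lemma subspaceB x y : N x -> N y -> N (x - y).
Proof. by move=> Nx Ny; rewrite -scaleN1r; apply/subspaceD/subspaceZ. Qed.

End Subspace.

Section InnerProduct.
Variables (R : realType) (V : lmodType R[i]) (ip : V -> V -> R[i]).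
Hypothesis ip_inner : is_inner_product ip.

Lemma ipDZl a x y z : ip (a *: x + y) z = a * ip x z + ip y z.
Proof. by case: ip_inner. Qed.
Lemma ipC x y : ip y x = (ip x y)^*.
Proof. by case: ip_inner. Qed.
Lemma ip_ge0 x : 0 <= ip x x.
Proof. by case: ip_inner. Qed.
Lemma ip_eq0 x : ip x x = 0 -> x = 0.
Proof. by case: ip_inner => _ _ _; apply. Qed.

Lemma ipDl x y z : ip (x + y) z = ip x z + ip y z.
Proof. by rewrite -{1}[x]scale1r ipDZl mul1r. Qed.
Lemma ip0l z : ip 0 z = 0.
Proof. by have := ipDl 0 0 z; rewrite addr0 -[X in X = _]addr0 => /addrI <-. Qed.
Lemma ipZl a x z : ip (a *: x) z = a * ip x z.
Proof. by rewrite -[_ *: x]addr0 ipDZl ip0l addr0. Qed.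
Lemma ipNl x z : ip (- x) z = - ip x z.
Proof. by rewrite -scaleN1r ipZl mulN1r. Qed.

Lemma ipDr x y z : ip z (x + y) = ip z x + ip z y.
Proof. by rewrite ipC ipDl rmorphD /= -!ipC. Qed.
Lemma ipZr a x z : ip z (a *: x) = a^* * ip z x.
Proof. by rewrite ipC ipZl rmorphM /= -ipC. Qed.
Lemma ipNr x z : ip z (- x) = - ip z x.
Proof. by rewrite ipC ipNl rmorphN /= -ipC. Qed.
Lemma ipBr x y z : ip z (x - y) = ip z x - ip z y.
Proof. by rewrite ipDr ipNr. Qed.

Definition nrm2 x := Re (ip x x).

Lemma ip_nrm2 x : ip x x = (nrm2 x)%:C.
Proof. exact/ge0_real/ip_ge0. Qed.
Lemma nrm2_ge0 x : 0 <= nrm2 x.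
Proof. by rewrite -lecR -ip_nrm2 ip_ge0. Qed.
Lemma nrm2D x y : nrm2 (x + y) = nrm2 x + nrm2 y + 2 * Re (ip x y).
Proof. by rewrite /nrm2 ipDl !ipDr !raddfD /= [ip y x]ipC ReJ; lra. Qed.
Lemma nrm2N x : nrm2 (- x) = nrm2 x.
Proof. by rewrite /nrm2 ipNl ipNr opprK. Qed.
Lemma nrm2B x y : nrm2 (x - y) = nrm2 x + nrm2 y - 2 * Re (ip x y).
Proof. by rewrite nrm2D nrm2N ipNr raddfN /=; lra. Qed.
Lemma nrm2Z (r : R) x : nrm2 (r%:C *: x) = r ^+ 2 * nrm2 x.
Proof. by rewrite /nrm2 ipZl ipZr conj_real mulrA ip_nrm2 -rmorphM Re_realM. Qed.
Lemma nrm2_parallelogram x y :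
  nrm2 (x + y) + nrm2 (x - y) = 2 * nrm2 x + 2 * nrm2 y.
Proof. by rewrite nrm2D nrm2B; lra. Qed.

(* [|x + y|^2 <= (1 + s) |x|^2 + (1 + 1/s) |y|^2], multiplied by [s] to avoid
   dividing by it; it comes from [|s x - y|^2 >= 0]. *)
Lemma nrm2D_le (s : R) x y : 0 <= s ->
  s * nrm2 (x + y) <= s * (1 + s) * nrm2 x + (1 + s) * nrm2 y.
Proof.
move=> s_ge0; have := nrm2_ge0 (s%:C *: x - y).
by rewrite nrm2B nrm2Z ipZl Re_realM nrm2D; nra.
Qed.

Lemma ip_eq0_Re z m : Re (ip z m) = 0 -> Re (ip z ('i *: m)) = 0 -> ip m z = 0.
Proof.
move=> Re0 Im0; rewrite ipZr Re_conjiM in Im0.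
by rewrite ipC [ip z m]complexE Re0 Im0 mulr0 addr0 rmorph0.
Qed.

Lemma orthD S x y : orth ip S x -> orth ip S y -> orth ip S (x + y).
Proof. by move=> Sx Sy m Sm; rewrite ipDr Sx // Sy // addr0. Qed.
Lemma orthB S x y : orth ip S x -> orth ip S y -> orth ip S (x - y).
Proof. by move=> Sx Sy m Sm; rewrite ipBr Sx // Sy // subrr. Qed.

Lemma seq_cvg_to_nrm2 u x : seq_cvg_to ip u x ->
  forall e : R, 0 < e -> exists N, forall n, (N <= n)%N -> nrm2 (u n - x) < e.
Proof.
move=> ux e e_gt0; have [|N uxN] := ux e%:C; first by rewrite ltcR.
by exists N => n /uxN; rewrite ip_nrm2 ltcR.
Qed.

Lemma nrm2_seq_cauchy u :
  (forall e : R, 0 < e -> exists N, forall m n, (N <= m)%N -> (N <= n)%N ->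
     nrm2 (u m - u n) < e) -> seq_cauchy ip u.
Proof.
move=> cau e; rewrite ltcE => /andP[/eqP Im_e Re_e].
have [N cauN] := cau _ Re_e; exists N => m n Nm Nn.
by rewrite ip_nrm2 ltcE /= Im_e eqxx cauN.
Qed.

Lemma nrm2_cvg_le u x y c : seq_cvg_to ip u y -> 0 <= c ->
  (forall e : R, 0 < e -> exists N, forall n, (N <= n)%N -> nrm2 (x - u n) <= c + e) ->
  nrm2 (x - y) <= c.
Proof.
move=> uy c_ge0 ux; apply/ler_addgt0Pr => e e_gt0.
pose s := Num.min 1 (e / (c + 4)).
have s_gt0 : 0 < s by rewrite lt_min ltr01 divr_gt0 //; lra.
have s_le1 : s <= 1 by rewrite ge_min lexx.
have s_le : s * (c + 4) <= e by rewrite -ler_pdivlMr ?ge_min ?lexx ?orbT //; lra.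
have [N1 xuN1] := ux s s_gt0.
have [N2 uyN2] := seq_cvg_to_nrm2 uy (exprn_gt0 2 s_gt0).
pose n := maxn N1 N2.
have := nrm2D_le (x - u n) (u n - y) (ltW s_gt0); rewrite addrA subrK.
have := xuN1 n (leq_maxl _ _); have := uyN2 n (leq_maxr _ _).
have := nrm2_ge0 (x - u n); have := nrm2_ge0 (u n - y).
set A := nrm2 (x - u n); set B := nrm2 (u n - y); set F := nrm2 (x - y).
move=> B_ge0 A_ge0 B_lt A_le F_le.
have sA : s * (1 + s) * A <= s * (1 + s) * (c + s) by rewrite ler_wpM2l //; nra.
have sB : (1 + s) * B <= (1 + s) * s ^+ 2 by rewrite ler_wpM2l ?ltW //; lra.
suff : s * F <= s * (c + e) by rewrite ler_pM2l.
nra.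
Qed.

End InnerProduct.

Section Projection.
Variables (R : realType) (V : lmodType R[i]) (ip : V -> V -> R[i]).
Hypothesis V_hilbert : is_hilbert ip.
Let ip_inner := V_hilbert.1.
Variables (N : set V) (x : V).
Hypotheses (N_sub : is_subspace N) (N_closed : is_closed_set ip N).

Lemma nrm2B_le_dist d a b : (forall m, N m -> d <= nrm2 ip (x - m)) -> N a -> N b ->
  nrm2 ip (a - b) + 4 * d <= 2 * nrm2 ip (x - a) + 2 * nrm2 ip (x - b).
Proof.
move=> d_lb Na Nb; pose mid := (2^-1 : R)%:C *: (a + b).
have Nmid : N mid by apply/(subspaceZ N_sub)/(subspaceD N_sub).
have mid_eq : (x - a) + (x - b) = (2 : R)%:C *: (x - mid).
  rewrite scalerBr scalerA -rmorphM mulfV ?pnatr_eq0 // scale1r.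
  by rewrite rmorph_nat scaler_nat mulr2n opprD addrACA.
have ab_eq : (x - a) - (x - b) = - (a - b) by rewrite opprB addrC addrA subrK opprB.
have := nrm2_parallelogram ip_inner (x - a) (x - b).
rewrite mid_eq ab_eq nrm2Z // nrm2N // expr2.
by have := d_lb _ Nmid; lra.
Qed.

Lemma minimizing_seq_cauchy d (g : nat -> V) :
  (forall m, N m -> d <= nrm2 ip (x - m)) ->
  (forall k, N (g k) /\ nrm2 ip (x - g k) < d + k.+1%:R^-1) -> seq_cauchy ip g.
Proof.
move=> d_lb gP; apply: (nrm2_seq_cauchy ip_inner) => e e_gt0.
have [k] : exists k, 0 + k.+1%:R^-1 < e / 4 by apply: ltr_add_invr; lra.
rewrite add0r => ke; exists k => m n km kn.
have := nrm2B_le_dist d_lb (gP m).1 (gP n).1.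
have := (gP m).2; have := (gP n).2.
have := invr_natS_le R km; have := invr_natS_le R kn.
(* lra accepts the inverses only as named atoms *)
set ik := k.+1%:R^-1 in ke *; set im := m.+1%:R^-1; set in_ := n.+1%:R^-1; lra.
Qed.

Lemma exists_min_dist :
  exists2 n, N n & forall m, N m -> nrm2 ip (x - n) <= nrm2 ip (x - m).
Proof.
pose S := [set nrm2 ip (x - m) | m in N].
have S_lb : lbound S 0 by move=> _ [m _ <-]; exact: nrm2_ge0.
have S_n0 : S !=set0 by exists (nrm2 ip (x - 0)), 0 => //; exact: subspace0.
have S_inf : has_inf S by split => //; exists 0.
pose d := inf S.
have d_lb m : N m -> d <= nrm2 ip (x - m) by move=> Nm; apply: ge_inf S_inf.2 _ _; exists m.
have g_ex k : exists m, N m /\ nrm2 ip (x - m) < d + k.+1%:R^-1.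
  have [|_ [m Nm <-]] := inf_adherent (_ : 0 < k.+1%:R^-1) S_inf.
    by rewrite invr_gt0 ltr0Sn.
  by exists m.
have [g gP] := choice g_ex.
have [n gn] := V_hilbert.2 g (minimizing_seq_cauchy d_lb gP).
have Nn : N n by apply: N_closed gn => k; exact: (gP k).1.
exists n => // m Nm; apply: le_trans (d_lb m Nm).
apply: (nrm2_cvg_le ip_inner gn) => [|e e_gt0]; first exact: lb_le_inf S_n0 S_lb.
have [k] := ltr_add_invr e_gt0; rewrite add0r => ke.
exists k => j kj; apply/ltW/(lt_le_trans (gP j).2).
by rewrite lerD2l; apply: le_trans (ltW ke); exact: invr_natS_le.
Qed.

Lemma min_dist_orth n : N n ->
  (forall m, N m -> nrm2 ip (x - n) <= nrm2 ip (x - m)) -> orth ip N (x - n).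
Proof.
move=> Nn n_min.
have Re0 m : N m -> Re (ip (x - n) m) = 0.
  move=> Nm; apply: (quadratic_ge0_coef0 (nrm2_ge0 ip_inner m)) => t.
  have := n_min _ (subspaceD N_sub (subspaceZ N_sub t%:C Nm) Nn).
  rewrite opprD addrA addrAC (nrm2B ip_inner (x - n)) nrm2Z // ipZr // conj_real Re_realM; lra.
move=> m Nm; apply: (ip_eq0_Re ip_inner); first exact: Re0.
exact/Re0/(subspaceZ N_sub).
Qed.

Theorem orth_proj_exists : exists2 n, N n & orth ip N (x - n).
Proof. by have [n Nn /(min_dist_orth Nn)] := exists_min_dist; exists n. Qed.

End Projection.

Section LinearOperator.
Variables (R : realType) (V W : lmodType R[i]) (A : op V W).
Hypothesis A_lin : op_linear A.

Lemma op_dom0 : dom A 0. Proof. exact: A_lin.1.1. Qed.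
Lemma op_domB x y : dom A x -> dom A y -> dom A (x - y).
Proof. exact: (subspaceB A_lin.1). Qed.
Lemma op_appB x y : dom A x -> dom A y -> app A (x - y) = app A x - app A y.
Proof. by move=> Dx Dy; rewrite addrC -scaleN1r A_lin.2 // scaleN1r addrC. Qed.
Lemma op_app0 : app A 0 = 0.
Proof. by have := op_appB op_dom0 op_dom0; rewrite !subrr. Qed.

Lemma kernel_op_subspace : is_subspace (kernel_op A).
Proof.
split; first by split; [exact: op_dom0 | exact: op_app0].
move=> a x y [Dx Ax] [Dy Ay]; split; first exact: A_lin.1.2.
by rewrite A_lin.2 // Ax Ay scaler0 addr0.
Qed.

End LinearOperator.

Section MoorePenrose.
Variables (R : realType) (V W : lmodType R[i]).
Variables (ipV : V -> V -> R[i]) (ipW : W -> W -> R[i]) (A : op V W).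
Hypotheses (V_inner : is_inner_product ipV) (W_inner : is_inner_product ipW).
Hypothesis A_lin : op_linear A.

Definition mp_solution (y : W) (x : V) : Prop :=
  coimage_dom ipV A x /\ exists y2, orth ipW (range_op A) y2 /\ y = app A x + y2.

Lemma mp_solution_uniq y x x' : mp_solution y x -> mp_solution y x' -> x = x'.
Proof.
move=> [[Dx x_orth] [z [z_orth y_eq]]] [[Dx' x'_orth] [z' [z'_orth y_eq']]].
have Dxx' := op_domB A_lin Dx Dx'.
have Axx' : app A (x - x') = z' - z.
  by rewrite op_appB //; apply: addr_eq_sub; rewrite -y_eq.
have ker_xx' : kernel_op A (x - x').
  split => //; apply: (ip_eq0 W_inner); rewrite {2}Axx'.
  by apply: (orthB W_inner z'_orth z_orth); exists (x - x').
apply/subr0_eq/(ip_eq0 V_inner).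
exact: (orthB V_inner x_orth x'_orth) ker_xx'.
Qed.

Lemma mp_appE y x : mp_solution y x -> mp_app ipV ipW A y = x.
Proof. by move=> yx; apply: (xget_unique _ yx) => x' /mp_solution_uniq; apply. Qed.

End MoorePenrose.

Section MoorePenroseExists.
Variables (R : realType) (V W : lmodType R[i]).
Variables (ipV : V -> V -> R[i]) (ipW : W -> W -> R[i]) (A : op V W).
Hypotheses (V_hilbert : is_hilbert ipV) (W_inner : is_inner_product ipW).
Hypothesis A_closed : closed_op ipV ipW A.
Let A_lin := A_closed.1.

Lemma closed_op_kernel_closed : is_closed_set ipV (kernel_op A).
Proof.
move=> u x ker_u ux; have [|//] := A_closed.2 u x 0 (fun n => (ker_u n).1) ux.
by move=> e e_gt0; exists 0%N => n _; rewrite (ker_u n).2 subrr ip0l.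
Qed.

Lemma mp_appP y : mp_dom ipW A y -> mp_solution ipV ipW A y (mp_app ipV ipW A y).
Proof.
move=> [_ [y2 [[x0 Dx0 <-] [y2_orth ->]]]].
have [n [Dn An0] x0n_orth] := orth_proj_exists V_hilbert x0
  (kernel_op_subspace A_lin) closed_op_kernel_closed.
apply: xgetPex; exists (x0 - n); split; first by split => //; exact: op_domB.
by exists y2; rewrite op_appB // An0 subr0.
Qed.

End MoorePenroseExists.

Lemma sum_ip_inner (R : realType) (V W : lmodType R[i])
    (ipV : V -> V -> R[i]) (ipW : W -> W -> R[i]) :
  is_inner_product ipV -> is_inner_product ipW -> is_inner_product (sum_ip ipV ipW).
Proof.
move=> V_inner W_inner; split.
- by move=> a x y z; rewrite /sum_ip /= (ipDZl V_inner) (ipDZl W_inner) mulrDr addrACA.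
- by move=> x y; rewrite /sum_ip rmorphD /= -!ipC.
- by move=> x; rewrite addr_ge0 ?ip_ge0.
- move=> [x1 x2] /eqP; rewrite /sum_ip /= paddr_eq0 ?ip_ge0 //.
  by case/andP => /eqP/(ip_eq0 V_inner) -> /eqP/(ip_eq0 W_inner) ->.
Qed.

Lemma upper_row_linear (R : realType) (H K : lmodType R[i])
    (T1 : op H H) (T2 : op K H) :
  op_linear T1 -> op_linear T2 -> op_linear (upper_row_op T1 T2).
Proof.
move=> T1_lin T2_lin; split.
  split; first by split; exact: op_dom0.
  by move=> a x y [Dx1 Dx2] [Dy1 Dy2]; split; [exact: T1_lin.1.2 | exact: T2_lin.1.2].
move=> a x y [Dx1 Dx2] [Dy1 Dy2]; rewrite /= T1_lin.2 // T2_lin.2 //.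
by apply: injective_projections; rewrite /= ?scaler0 ?addr0 // scalerDr addrACA.
Qed.

Section UpperRow.
Variables (R : realType) (H K : lmodType R[i]).
Variables (ipH : H -> H -> R[i]) (ipK : K -> K -> R[i]).
Hypotheses (H_hilbert : is_hilbert ipH) (K_hilbert : is_hilbert ipK).
Variables (T1 : op H H) (T2 : op K H).
Hypotheses (T1_closed : closed_op ipH ipH T1) (T2_closed : closed_op ipK ipH T2).
Hypothesis range_orth :
  forall y1 y2 : H, range_op T1 y1 -> range_op T2 y2 -> ipH y1 y2 = 0.

Let H_inner := H_hilbert.1.
Let K_inner := K_hilbert.1.
Let T1_lin := T1_closed.1.
Let T2_lin := T2_closed.1.
Local Notation T := (upper_row_op T1 T2).
Local Notation ipHK := (sum_ip ipH ipK).

Lemma range2_orth1 : range_op T2 `<=` orth ipH (range_op T1).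
Proof. by move=> y2 R2y2 y1 R1y1; exact: range_orth. Qed.
Lemma range1_orth2 : range_op T1 `<=` orth ipH (range_op T2).
Proof. by move=> y1 R1y1 y2 R2y2; rewrite ipC // range_orth // rmorph0. Qed.

Lemma orth_range_upper_row z k : orth ipHK (range_op T) (z, k) <->
  orth ipH (range_op T1) z /\ orth ipH (range_op T2) z.
Proof.
split=> [zk_orth | [z_orth1 z_orth2]].
  split=> _ [x Dx <-].
    have Rx : range_op T (app T (x, 0)) by exists (x, 0); split => //; exact: op_dom0.
    by have := zk_orth _ Rx; rewrite /sum_ip /= op_app0 // addr0 ip0l // addr0.
  have Rx : range_op T (app T (0, x)) by exists (0, x); split => //; exact: op_dom0.
  by have := zk_orth _ Rx; rewrite /sum_ip /= op_app0 // add0r ip0l // addr0.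
move=> _ [[x1 x2] [D1 D2] <-].
have R1 : range_op T1 (app T1 x1) by exists x1.
have R2 : range_op T2 (app T2 x2) by exists x2.
by rewrite /sum_ip /= ip0l // addr0 ipDl // z_orth1 // z_orth2 // addr0.
Qed.

Lemma kernel_upper_row x1 x2 : kernel_op T (x1, x2) -> kernel_op T1 x1 /\ kernel_op T2 x2.
Proof.
move=> [[D1 D2] /(congr1 fst) /= T12_0].
have T1_0 : app T1 x1 = 0.
  apply: (ip_eq0 H_inner); move/eqP: (T12_0); rewrite addr_eq0 => /eqP {2}->.
  by rewrite ipNr // range_orth ?oppr0 //; [exists x1 | exists x2].
by rewrite T1_0 add0r in T12_0.
Qed.

Lemma upper_row_split a1 a2 z1 z2 h k : dom T1 a1 -> dom T2 a2 ->
  orth ipH (range_op T1) z1 -> orth ipH (range_op T2) z2 ->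
  h = app T1 a1 + z1 -> h = app T2 a2 + z2 ->
  orth ipHK (range_op T) (z1 - app T2 a2, k) /\
  (h, k) = app T (a1, a2) + (z1 - app T2 a2, k).
Proof.
move=> D1 D2 z1_orth z2_orth h1 h2.
have z_eq : z1 - app T2 a2 = z2 - app T1 a1 by apply: addr_eq_sub; rewrite addrC -h1.
split.
  apply/orth_range_upper_row; split.
    by apply: orthB z1_orth _ => //; apply: range2_orth1; exists a2.
  by rewrite z_eq; apply: orthB z2_orth _ => //; apply: range1_orth2; exists a1.
apply: injective_projections; rewrite /= ?add0r //.
by rewrite h1 addrACA subrr addr0.
Qed.

Lemma mp_dom_upper_row :
  mp_dom ipHK T = [set y | mp_dom ipH T1 y.1 /\ mp_dom ipH T2 y.1].
Proof.
apply/seteqP; split=> [y | [h k]] /=.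
  move=> [_ [[z k'] [[[x1 x2] [D1 D2] <-] [/orth_range_upper_row [z_orth1 z_orth2] ->]]]].
  split.
    exists (app T1 x1), (app T2 x2 + z); split; first by exists x1.
    split; last by rewrite /= addrA.
    by apply: orthD z_orth1 => //; apply: range2_orth1; exists x2.
  exists (app T2 x2), (app T1 x1 + z); split; first by exists x2.
  split; last by rewrite /= addrCA addrA.
  by apply: orthD z_orth2 => //; apply: range1_orth2; exists x1.
move=> [[_ [z1 [[a1 D1 <-] [z1_orth h1]]]] [_ [z2 [[a2 D2 <-] [z2_orth h2]]]]].
exists (app T (a1, a2)), (z1 - app T2 a2, k); split; first by exists (a1, a2).
exact: upper_row_split k D1 D2 z1_orth z2_orth h1 h2.
Qed.

Lemma mp_app_upper_row y : mp_dom ipHK T y ->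
  mp_app ipHK ipHK T y = (mp_app ipH ipH T1 y.1, mp_app ipK ipH T2 y.1).
Proof.
case: y => h k; rewrite mp_dom_upper_row => -[].
move=> /(mp_appP H_hilbert H_inner T1_closed) [[D1 x1_orth] [w1 [w1_orth h1]]].
move=> /(mp_appP K_hilbert H_inner T2_closed) [[D2 x2_orth] [w2 [w2_orth h2]]].
have HK_inner := sum_ip_inner H_inner K_inner.
apply: (mp_appE HK_inner HK_inner (upper_row_linear T1_lin T2_lin)); split.
  split=> [|[a b] /kernel_upper_row [ker_a ker_b]]; first by split.
  by rewrite /sum_ip /= x1_orth // x2_orth // addr0.
exists (w1 - app T2 (mp_app ipK ipH T2 h), k).
exact: upper_row_split k D1 D2 w1_orth w2_orth h1 h2.
Qed.

End UpperRow.

Theorem theorem2p23 (R : realType)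
  (H : lmodType R[i]) (ipH : H -> H -> R[i])
  (K : lmodType R[i]) (ipK : K -> K -> R[i])
  (hH : is_hilbert ipH) (hK : is_hilbert ipK)
  (T1 : op H H) (T2 : op K H)
  (hT1d : densely_defined ipH T1) (hT1c : closed_op ipH ipH T1)
  (hT1r : closed_range ipH T1)
  (hT2d : densely_defined ipK T2) (hT2c : closed_op ipK ipH T2)
  (hT2r : closed_range ipH T2)
  (horth : forall y1 y2 : H, range_op T1 y1 -> range_op T2 y2 -> ipH y1 y2 = 0) :
  op_eq (mp_inverse (sum_ip ipH ipK) (sum_ip ipH ipK) (upper_row_op T1 T2))
        (left_col_op (mp_inverse ipH ipH T1) (mp_inverse ipK ipH T2)).
Proof.
split; first exact: mp_dom_upper_row.
by move=> y; apply: mp_app_upper_row.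
Qed.
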